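(* Let $n\ge 3$, let $\alpha,\beta>0$, and let $S\in\overline{\mathcal{S}}_n$ be an $\alpha/\beta$-staircase tableau that has the symbol $\alpha$ in box $(n-1,1)$. Then \[\mathbb{P}_{n,\alpha,\beta}\big(S \,\big|\, \alpha_{n-1,1}\big)=\mathbb{P}_{n-2,\alpha,\beta}\big(S[1,3]\big),\] where $\alpha_{n-1,1}$ denotes the event that box $(n-1,1)$ contains $\alpha$. In other words, conditioned on $\alpha_{n-1,1}$, the subtableau $S[1,3]$ of a random $S$ with law $\mathbb{P}_{n,\alpha,\beta}$ is a random tableau in $\overline{\mathcal{S}}_{n-2}$ with law $\mathbb{P}_{n-2,\alpha,\beta}$.
   Context: A staircase tableau of size $n$ has boxes $(i,j)$ with $i,j\ge1$ and $i+j\le n+1$ (shape $(n,n-1,\dots,1)$), rows numbered from the top and columns from the left. An $\alpha/\beta$-staircase tableau of size $n$ is a filling in which each box is empty or contains one of the symbols $\alpha$, $\beta$, such that: all boxes in the same column and above a box containing $\alpha$ are empty; all boxes in the same row and to the left of a box containing $\beta$ are empty; every box on the main diagonal (boxes with $i+j=n+1$) contains a symbol. $\overline{\mathcal{S}}_n$ is the set of these. The weight of $S$ is $wt(S)=\alpha^{N_\alpha}\beta^{N_\beta}$, where $N_\alpha,N_\beta$ are the numbers of $\alpha$'s and $\beta$'s in $S$, and for real parameters $\alpha,\beta>0$, $\mathbb{P}_{n,\alpha,\beta}(S)=wt(S)/Z_n(\alpha,\beta)$ with $Z_n(\alpha,\beta)=\sum_{S\in\overline{\mathcal{S}}_n}wt(S)$.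 For $S\in\overline{\mathcal{S}}_n$ and a box $(i,j)$, $S[i,j]\in\overline{\mathcal{S}}_{n-i-j+2}$ denotes the subtableau obtained by deleting the first $i-1$ rows and the first $j-1$ columns. *)

From mathcomp Require Import all_boot all_order all_algebra.
Set Implicit Arguments. Unset Strict Implicit. Unset Printing Implicit Defensive.
Import Order.TTheory GRing.Theory Num.Theory.

(* Content of a box: None = empty, Some true = alpha, Some false = beta. *)
Definition cell := option bool.
Definition Alpha : cell := Some true.
Definition Beta : cell := Some false.

(* A filling of the n x n grid; internally 0-indexed: entry (i,j) is box (i+1,j+1). *)
Definition tab (n : nat) := {ffun 'I_n * 'I_n -> cell}.

(* Content of box (i,j) in 1-indexed coordinates (rows from top, columns from left);
   None outside the grid. *)
Definition box (n : nat) (S : tab n) (i j : nat) : cell :=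
  match @insub _ (fun k => k < n) _ i.-1, @insub _ (fun k => k < n) _ j.-1 with
  | Some i', Some j' => if (0 < i) && (0 < j) then S (i', j') else None
  | _, _ => None
  end.

(* S is an alpha/beta-staircase tableau of size n (in \bar S_n).
   Boxes (i,j) (0-indexed) of the staircase shape: i + j < n, i.e. (i+1)+(j+1) <= n+1. *)
Definition is_stair (n : nat) (S : tab n) : bool :=
  [&& [forall p : 'I_n * 'I_n, (n <= p.1 + p.2) ==> (S p == None)],
      [forall p : 'I_n * 'I_n, (S p == Alpha) ==>
          [forall k : 'I_n, (k < p.1) ==> (S (k, p.2) == None)]],
      [forall p : 'I_n * 'I_n, (S p == Beta) ==>
          [forall k : 'I_n, (k < p.2) ==> (S (p.1, k) == None)]] &
      [forall p : 'I_n * 'I_n, (p.1 + p.2 == n.-1) ==> (S p != None)]].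

Definition stairs (n : nat) : {set tab n} := [set S | is_stair S].

Definition N_alpha (n : nat) (S : tab n) : nat := #|[set p | S p == Alpha]|.
Definition N_beta (n : nat) (S : tab n) : nat := #|[set p | S p == Beta]|.

Local Open Scope ring_scope.

Definition wt (R : realFieldType) (a b : R) (n : nat) (S : tab n) : R :=
  a ^+ N_alpha S * b ^+ N_beta S.

Definition Zn (R : realFieldType) (a b : R) (n : nat) : R :=
  \sum_(S in stairs n) wt a b S.

Definition Pr (R : realFieldType) (a b : R) (n : nat) (S : tab n) : R :=
  wt a b S / Zn a b n.

Definition PrE (R : realFieldType) (a b : R) (n : nat) (E : {set tab n}) : R :=
  \sum_(S in stairs n :&: E) Pr a b S.

Definition Pcond (R : realFieldType) (a b : R) (n : nat) (S : tab n) (E : {set tab n}) : R :=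
  PrE a b ([set S] :&: E) / PrE a b E.

Definition alpha_ev (n i j : nat) : {set tab n} := [set S | box S i j == Alpha].

(* Subtableau S[i,j] of size n - i - j + 2 (written n.+2 - i - j to avoid truncation),
   obtained by deleting the first i-1 rows and j-1 columns. *)
Definition subtab (n : nat) (S : tab n) (i j : nat) : tab (n.+2 - i - j) :=
  [ffun p : 'I_(n.+2 - i - j) * 'I_(n.+2 - i - j) =>
     box S (p.1 + i) (p.2 + j)].

From mathcomp Require Import all_boot all_order all_algebra.
From mathcomp Require Import zify ring.
Import Order.TTheory GRing.Theory Num.Theory.
Set Implicit Arguments. Unset Strict Implicit. Unset Printing Implicit Defensive.

(* A tableau of size m+2 with alpha in box (m+1,1) is forced in its first two
   columns: the diagonal box (m+2,1) cannot hold alpha (it would empty the box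
   above it), so it holds beta; the diagonal box (m+1,2) cannot hold beta (it
   would empty box (m+1,1)), so it holds alpha; and the two alphas empty
   everything above them.  Hence T |-> "T shifted two columns right, with these
   three symbols added" is a bijection from the size-m tableaux onto the event,
   multiplying every weight by a^2 b, and S[1,3] is its inverse. *)

Definition entry n (T : tab n) (i j : nat) : cell := box T i.+1 j.+1.

Lemma entry_ord n (T : tab n) (i j : 'I_n) : entry T i j = T (i, j).
Proof.
rewrite /entry /box /= (insubT (fun k => k < n) (ltn_ord i)).
rewrite (insubT (fun k => k < n) (ltn_ord j)) /=.
by congr (T (_, _)); apply: val_inj.
Qed.

Lemma entry_nat n (T : tab n) i j (hi : i < n) (hj : j < n) :
  entry T i j = T (Ordinal hi, Ordinal hj).
Proof. exact: (entry_ord T (Ordinal hi) (Ordinal hj)). Qed.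

Lemma entry_out n (T : tab n) i j : (n <= i) || (n <= j) -> entry T i j = None.
Proof.
rewrite /entry /box /= => /orP [h|h]; first by rewrite insubF // ltnNge h.
by case: (insub i) => // ?; rewrite insubF // ltnNge h.
Qed.

Lemma tab_entryP n (T T' : tab n) :
  (forall i j, entry T i j = entry T' i j) -> T = T'.
Proof. by move=> E; apply/ffunP => -[i j]; rewrite -!entry_ord. Qed.

Definition staircase n (g : nat -> nat -> cell) : Prop :=
  [/\ forall i j, n <= i + j -> g i j = None,
      forall i j k, g i j = Alpha -> k < i -> g k j = None,
      forall i j k, g i j = Beta -> k < j -> g i k = None &
      forall i j, i + j = n.-1 -> g i j <> None].

Lemma staircase_eq n g g' :
  (forall i j, g i j = g' i j) -> staircase n g -> staircase n g'.
Proof.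
move=> E [H1 H2 H3 H4]; split.
- by move=> i j h; rewrite -E H1.
- by move=> i j k; rewrite -!E; apply: H2.
- by move=> i j k; rewrite -!E; apply: H3.
- by move=> i j; rewrite -E; apply: H4.
Qed.

Lemma staircase_out n g i j :
  staircase n g -> (n <= i) || (n <= j) -> g i j = None.
Proof. by case=> H1 _ _ _ h; apply: H1; lia. Qed.

Lemma mem_stairs n (T : tab n) : 0 < n -> T \in stairs n <-> staircase n (entry T).
Proof.
move=> n_gt0; rewrite inE /is_stair; split.
  case/and4P => /forallP H1 /forallP H2 /forallP H3 /forallP H4; split.
  - move=> i j hij.
    have [hi|hi] := ltnP i n; last by apply: entry_out; rewrite hi.
    have [hj|hj] := ltnP j n; last by apply: entry_out; rewrite hj orbT.
    by rewrite entry_nat; move: (H1 (Ordinal hi, Ordinal hj)); rewrite /= hij => /eqP.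
  - move=> i j k hA hk.
    have [hi|hi] := ltnP i n; last by rewrite entry_out ?hi in hA.
    have [hj|hj] := ltnP j n; last by rewrite entry_out ?hj ?orbT in hA.
    have hk' : k < n by apply: ltn_trans hi.
    rewrite entry_nat in hA; rewrite entry_nat.
    move: (H2 (Ordinal hi, Ordinal hj)); rewrite /= hA eqxx /=.
    by move/forallP/(_ (Ordinal hk')); rewrite /= hk => /eqP.
  - move=> i j k hB hk.
    have [hi|hi] := ltnP i n; last by rewrite entry_out ?hi in hB.
    have [hj|hj] := ltnP j n; last by rewrite entry_out ?hj ?orbT in hB.
    have hk' : k < n by apply: ltn_trans hj.
    rewrite entry_nat in hB; rewrite entry_nat.
    move: (H3 (Ordinal hi, Ordinal hj)); rewrite /= hB eqxx /=.
    by move/forallP/(_ (Ordinal hk')); rewrite /= hk => /eqP.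
  - move=> i j hij; have hi : i < n by lia.
    have hj : j < n by lia.
    by rewrite entry_nat; move: (H4 (Ordinal hi, Ordinal hj)); rewrite /= hij eqxx => /eqP.
case=> H1 H2 H3 H4; apply/and4P; split; apply/forallP => -[i j] /=;
  apply/implyP => h.
- by rewrite -entry_ord; apply/eqP; apply: H1.
- apply/forallP => k; apply/implyP => hk; rewrite -entry_ord; apply/eqP.
  by apply: (H2 i j) => //; rewrite entry_ord; apply/eqP.
- apply/forallP => k; apply/implyP => hk; rewrite -entry_ord; apply/eqP.
  by apply: (H3 i j) => //; rewrite entry_ord; apply/eqP.
- by rewrite -entry_ord; apply/eqP; apply: H4; apply/eqP.
Qed.

Definition extendf m (g : nat -> nat -> cell) (i j : nat) : cell :=
  match j with
  | 0 => if i == m then Alpha else if i == m.+1 then Beta else None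
  | 1 => if i == m then Alpha else None
  | j'.+2 => g i j'
  end.

Lemma extendf_eq m g g' :
  (forall i j, g i j = g' i j) -> forall i j, extendf m g i j = extendf m g' i j.
Proof. by move=> E i [|[|j]] /=. Qed.

Definition dropf m (g : nat -> nat -> cell) (i j : nat) : cell :=
  if (i < m) && (j < m) then g i j.+2 else None.

Lemma staircase_extendf m g : 0 < m -> staircase m g -> staircase m.+2 (extendf m g).
Proof.
move=> m_gt0 Hg; have g_out := staircase_out Hg; case: Hg => H1 H2 H3 H4.
split.
- move=> i [|[|j]] /= h; last by apply: H1; lia.
  + by rewrite !ifN_eq //; apply/eqP; lia.
  + by rewrite !ifN_eq //; apply/eqP; lia.
- move=> i [|[|j]] k /= hA hk; last exact: H2 hA hk.
  + have [Ei|ni] := eqVneq i m; last by move: hA; rewrite (negbTE ni); case: eqP.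
    by rewrite !ifN_eq //; apply/eqP; lia.
  + have [Ei|ni] := eqVneq i m; last by move: hA; rewrite (negbTE ni).
    by rewrite !ifN_eq //; apply/eqP; lia.
- move=> i [|[|j]] k //= hB hk; first by move: hB; case: (i == m).
  have hi : i < m by rewrite ltnNge; apply/negP => hi; rewrite g_out ?hi in hB.
  case: k hk => [|[|k]] /= hk; last exact: H3 hB hk.
  + by rewrite !ifN_eq //; apply/eqP; lia.
  + by rewrite !ifN_eq //; apply/eqP; lia.
- move=> i [|[|j]] /= h; last by apply: H4; lia.
  + have -> : i = m.+1 by lia.
    by rewrite gtn_eqF // eqxx.
  + have -> : i = m by lia.
    by rewrite eqxx.
Qed.

Lemma staircase_dropf m g : 0 < m -> staircase m.+2 g -> staircase m (dropf m g).
Proof.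
move=> m_gt0 [H1 H2 H3 H4]; rewrite /dropf; split.
- by move=> i j h; case: ifP => // _; apply: H1; lia.
- move=> i j k; case: ifP => // /andP [hi hj] hA hk.
  by rewrite ifT; [exact: H2 hA hk | apply/andP; split => //; lia].
- move=> i j k; case: ifP => // /andP [hi hj] hB hk.
  by rewrite ifT; [apply: H3 hB _; lia | apply/andP; split => //; lia].
- by move=> i j h; rewrite ifT; [apply: H4; lia | apply/andP; split; lia].
Qed.

Lemma extendf_dropf m g : 0 < m -> staircase m.+2 g -> g m 0 = Alpha ->
  forall i j, extendf m (dropf m g) i j = g i j.
Proof.
move=> m_gt0 Hg gA; have g_out := staircase_out Hg; case: Hg => H1 H2 H3 H4.
have gA1 : g m 1 = Alpha.
  have := H4 m 1 (addn1 m); case E: (g m 1) => [[]|] // _.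
  by rewrite (H3 _ _ 0 E) in gA.
move=> i [|[|j]] /=.
- have [->|im] := eqVneq i m; first by rewrite gA.
  have [->|im1] := eqVneq i m.+1.
    have := H4 m.+1 0 (addn0 _); case E: (g m.+1 0) => [[]|] // _.
    by rewrite (H2 _ _ m E) in gA.
  have [hi|hi] := ltnP i m; first by rewrite (H2 _ _ i gA).
  by rewrite H1 //; lia.
- have [->|im] := eqVneq i m; first by rewrite gA1.
  have [hi|hi] := ltnP i m; first by rewrite (H2 _ _ i gA1).
  by rewrite H1 //; lia.
- rewrite /dropf; case: ifP => // /negbT.
  by rewrite negb_and -!leqNgt => h; rewrite H1 //; lia.
Qed.

Lemma card_cells n (T : tab n) c :
  #|[set p | T p == c]| = \sum_(0 <= i < n) \sum_(0 <= j < n) (entry T i j == c).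
Proof.
rewrite -sum1_card big_mkcond /= big_mkord.
under [RHS]eq_bigr do rewrite big_mkord.
rewrite pair_bigA /=; apply: eq_bigr => -[i j] _.
by rewrite entry_ord inE; case: (_ == c).
Qed.

Lemma count_extendf N m g c : N = m.+2 -> c != None ->
  (forall i j, (m <= i) || (m <= j) -> g i j = None) ->
  \sum_(0 <= i < N) \sum_(0 <= j < N) (extendf m g i j == c) =
  \sum_(0 <= i < m) \sum_(0 <= j < m) (g i j == c) + (Alpha == c).*2 + (Beta == c).
Proof.
move=> -> /negbTE cN g_out.
have None_c : (None == c) = false by rewrite eq_sym.
have vanish (F : nat -> nat) : (forall i, i < m -> F i = 0) -> \sum_(0 <= i < m) F i = 0.
  by move=> F0; rewrite (eq_big_nat _ _ (F2 := fun=> 0)) ?big1_eq // => i /andP[_ /F0].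
have new_cols k : k <= 1 -> \sum_(0 <= i < m) (extendf m g i k == c) = 0.
  move=> k_le1; apply: vanish => i im.
  have im1 : i < m.+1 by apply: ltn_trans im _.
  by case: k k_le1 => [|[|]] //= _; rewrite (ltn_eqF im) ?(ltn_eqF im1) None_c.
have rows_out k : m <= k -> \sum_(0 <= j < m) (g k j == c) = 0.
  by move=> mk; apply: vanish => j _; rewrite g_out ?mk ?None_c.
have sum_cols i : \sum_(0 <= j < m.+2) (extendf m g i j == c) =
    (extendf m g i 0 == c) + (extendf m g i 1 == c) + \sum_(0 <= j < m) (g i j == c).
  by rewrite big_nat_recl // big_nat_recl // addnA.
rewrite (eq_bigr _ (fun i _ => sum_cols i)) !big_split !big_nat_recr //.
rewrite !new_cols // !rows_out // /= eqxx gtn_eqF // eqxx None_c.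
lia.
Qed.

Definition extend n (T : tab (n - 2)) : tab n :=
  [ffun p : 'I_n * 'I_n => extendf (n - 2) (entry T) p.1 p.2].

Section Extension.

Variable n : nat.
Hypothesis n_gt2 : 2 < n.
Local Notation m := (n - 2).

Let n_eq : n = m.+2. Proof. lia. Qed.
Let m_gt0 : 0 < m. Proof. lia. Qed.
Let n_gt0 : 0 < n. Proof. lia. Qed.

Lemma entry_extend (T : tab m) i j : entry (extend T) i j = extendf m (entry T) i j.
Proof.
have [hi|hi] := ltnP i n; have [hj|hj] := ltnP j n.
- by rewrite entry_nat ffunE.
- rewrite entry_out ?hj ?orbT //; case: j hj => [|[|j]] //= hj; try lia.
  by rewrite entry_out // orbC; apply/orP; left; lia.
- rewrite entry_out ?hi //; case: j hj => [|[|j]] //= hj.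
  + by rewrite !ifN_eq //; apply/eqP; lia.
  + by rewrite !ifN_eq //; apply/eqP; lia.
  + by rewrite entry_out //; apply/orP; left; lia.
- rewrite entry_out ?hi //; case: j hj => [|[|j]] //= hj; try lia.
  by rewrite entry_out //; apply/orP; left; lia.
Qed.

Lemma entry_subtab (S : tab n) i j :
  entry (subtab S 1 3) i j = dropf m (entry S) i j.
Proof.
rewrite /dropf; case: ifP => [/andP [hi hj]|/negbT].
  by rewrite (entry_nat _ hi hj) ffunE /= addn1 addn3.
by rewrite negb_and -!leqNgt => h; rewrite entry_out.
Qed.

Lemma mem_alpha_ev (S : tab n) : (S \in alpha_ev n n.-1 1) = (entry S m 0 == Alpha).
Proof. by rewrite inE /entry (_ : n.-1 = m.+1) //; lia. Qed.

Lemma subtab_extend (T : tab m) : subtab (extend T) 1 3 = T.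
Proof.
apply: tab_entryP => i j; rewrite entry_subtab /dropf.
case: ifP => [_|/negbT]; first by rewrite entry_extend.
by rewrite negb_and -!leqNgt => h; rewrite entry_out.
Qed.

Lemma extend_inj : injective (@extend n).
Proof. by move=> T1 T2 /(congr1 (fun S => subtab S 1 3)); rewrite !subtab_extend. Qed.

Lemma extend_stairs (T : tab m) : T \in stairs m -> extend T \in stairs n.
Proof.
move=> /(mem_stairs _ m_gt0) /(staircase_extendf m_gt0); rewrite -n_eq => Hst.
apply/(mem_stairs _ n_gt0).
by apply: staircase_eq Hst => i j; rewrite entry_extend.
Qed.

Lemma stairs_alpha_subtab (S : tab n) : S \in stairs n -> entry S m 0 = Alpha ->
  subtab S 1 3 \in stairs m /\ extend (subtab S 1 3) = S.
Proof.
move=> /(mem_stairs _ n_gt0); rewrite {1}n_eq => Hst S_alpha; split.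
  apply/(mem_stairs _ m_gt0); apply: staircase_eq (staircase_dropf m_gt0 Hst).
  by move=> i j; rewrite entry_subtab.
apply: tab_entryP => i j; rewrite entry_extend -(extendf_dropf m_gt0 Hst S_alpha).
by apply: extendf_eq => i' j'; rewrite entry_subtab.
Qed.

Lemma stairs_alpha_ev : stairs n :&: alpha_ev n n.-1 1 = @extend n @: stairs m.
Proof.
apply/setP => S; apply/setIP/imsetP => [[S_st]|[T T_st ->]].
  rewrite mem_alpha_ev => /eqP S_alpha.
  have [sub_st sub_ext] := stairs_alpha_subtab S_st S_alpha.
  by exists (subtab S 1 3).
by rewrite mem_alpha_ev entry_extend /= eqxx; split; first exact: extend_stairs.
Qed.

Lemma count_extend (T : tab m) c : c != None ->
  #|[set p | extend T p == c]| = #|[set p | T p == c]| + (Alpha == c).*2 + (Beta == c).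
Proof.
move=> cN; rewrite !card_cells.
under eq_bigr do under eq_bigr do rewrite entry_extend.
by rewrite (count_extendf n_eq cN) // => i j; apply: entry_out.
Qed.

Lemma N_alpha_extend (T : tab m) : N_alpha (extend T) = (N_alpha T).+2.
Proof. by rewrite /N_alpha count_extend // addn0 addn2. Qed.

Lemma N_beta_extend (T : tab m) : N_beta (extend T) = (N_beta T).+1.
Proof. by rewrite /N_beta count_extend // eqxx addn0 addn1. Qed.

End Extension.

Local Open Scope ring_scope.

Lemma wt_gt0 (R : realFieldType) (a b : R) n (T : tab n) :
  0 < a -> 0 < b -> 0 < wt a b T.
Proof. by move=> a_gt0 b_gt0; rewrite /wt mulr_gt0 // exprn_gt0. Qed.

Lemma Zn_gt0 (R : realFieldType) (a b : R) n (T : tab n) :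
  0 < a -> 0 < b -> T \in stairs n -> 0 < Zn a b n.
Proof.
move=> a_gt0 b_gt0 T_st; rewrite /Zn (bigD1 T) //=.
rewrite ltr_pwDl ?wt_gt0 // sumr_ge0 // => U _.
exact/ltW/wt_gt0.
Qed.

Lemma wt_extend (R : realFieldType) (a b : R) n (T : tab (n - 2)) : (2 < n)%N ->
  wt a b (extend T) = a ^+ 2 * b * wt a b T.
Proof.
move=> n_gt2; rewrite /wt N_alpha_extend // N_beta_extend //.
by rewrite !exprS; ring.
Qed.

Theorem lemma3p1 (R : realFieldType) (a b : R) (n : nat) (S : tab n) :
  (3 <= n)%N -> 0 < a -> 0 < b ->
  S \in stairs n -> S \in alpha_ev n n.-1 1 ->
  Pcond a b S (alpha_ev n n.-1 1) = @Pr R a b (n - 2) (subtab S 1 3).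
Proof.
move=> n_gt2 a_gt0 b_gt0 S_st S_ev.
have S_alpha : entry S (n - 2) 0 = Alpha by apply/eqP; rewrite -mem_alpha_ev.
have [sub_st sub_ext] := stairs_alpha_subtab n_gt2 S_st S_alpha.
rewrite /Pcond /PrE.
have -> : stairs n :&: ([set S] :&: alpha_ev n n.-1 1) = [set S].
  by apply/setP => T; rewrite !in_setI in_set1; case: eqP => [->|]; rewrite ?S_st ?S_ev ?andbF.
rewrite big_set1 stairs_alpha_ev // big_imset /=; last first.
  exact: in2W (extend_inj n_gt2).
rewrite /Pr; under eq_bigr do rewrite wt_extend //.
rewrite -mulr_suml -mulr_sumr -/(Zn a b _) -{1}sub_ext wt_extend //.
have Zn_pos := Zn_gt0 a_gt0 b_gt0 S_st.
have Zm_pos := Zn_gt0 a_gt0 b_gt0 sub_st.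
have c_pos : 0 < a ^+ 2 * b by rewrite mulr_gt0 // exprn_gt0.
by field; rewrite !gt_eqF.
Qed.
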